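(* Let $d\ge2$, $n\ge1$, $d\le t\le dn$, and let $\gamma$ be a positive conductivity on the lattice graph below. The following are equivalent: (i) the only $\mathbf u\in\mathbb R^{L_t^{\mathcal S}\cup J_{t-1}^{\mathcal S}}$ with $\sum_{q\in\mathcal N(p)}\gamma_{pq}(\mathbf u_q-\mathbf u_p)=0$ for all $p\in L_{t-1}^{\mathcal S}$, $\mathbf u=0$ on $J_{t-1}^{\mathcal S}$, and $\gamma_{bq_b}(\mathbf u_{q_b}-\mathbf u_b)=0$ for all $b\in J_{t-1}^{\mathcal S}$, is $\mathbf u=0$; (ii) the vectors $\{\mathbf v_p|_{L_{t-1}^{\mathcal S}\cup J_{t-1}^{\mathcal S}}:p\in L_t^{\mathcal S}\}$ are linearly independent; (iii) the operator $T_2'^{(t)}$ is injective.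
   Context: Lattice: $D=\{x\in\mathbb Z^d:1\le x_i\le n\ \forall i\}$, $\partial D=\{p\in\mathbb Z^d:\min_{q\in D}\|q-p\|_{\ell^1}=1\}$; $E$ = unordered pairs $pq\subseteq D\cup\partial D$ with $\|p-q\|_{\ell^1}=1$, not both in $\partial D$; $\mathcal N(p)=\{q:pq\in E\}$; each $b\in\partial D$ has a unique neighbour $q_b\in D$. Conductivity $\gamma:E\to(0,\infty)$, symmetric. For $p\in D\cup\partial D$, $\mathbf v_p\in\mathbb R^{D\cup\partial D}$ has $(\mathbf v_p)_q=\gamma_{pq}$ for $q\in\mathcal N(p)$, $(\mathbf v_p)_p=-\sum_{r\in\mathcal N(p)}\gamma_{pr}$, and $0$ elsewhere. With $s(x)=\sum_ix_i$: $L_t=\{x\in D:s(x)=t\}$, $L_t^{\mathcal S}=\{x\in D:s(x)\le t\}$, $K_t^+=\{x\in\partial D:s(x)=t,\max_ix_i=n+1\}$, $K_t^-=\{x\in\partial D:s(x)=t,\min_ix_i=0\}$, $K_t^{\mathcal S\pm}=\bigcup_{\ell\le t}K_\ell^\pm$, $J_t^{\mathcal S}=K_t^{\mathcal S-}\cup K_{t+1}^{\mathcal S+}$. $T_2'^{(t)}:\mathbb R^{L_t}\to\mathbb R^{J_{t-1}^{\mathcal S}}$: for $\mathbf x\in\mathbb R^{L_t}$ let $\mathbf u$ be the unique function on $L_t^{\mathcal S}\cup J_{t-1}^{\mathcal S}$ with $\mathbf u=\mathbf x$ on $L_t$, $\mathbf u=0$ on $J_{t-1}^{\mathcal S}$,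 and $\sum_{q\in\mathcal N(p)}\gamma_{pq}(\mathbf u_q-\mathbf u_p)=0$ for $p\in L_{t-1}^{\mathcal S}$; then $(T_2'^{(t)}\mathbf x)_b=\gamma_{bq_b}(\mathbf u_{q_b}-\mathbf u_b)$ for $b\in J_{t-1}^{\mathcal S}$. *)

From HB Require Import structures.
From mathcomp Require Import all_boot all_order all_algebra.
From mathcomp Require Import reals.
Set Implicit Arguments. Unset Strict Implicit. Unset Printing Implicit Defensive.
Import Order.TTheory GRing.Theory Num.Theory.
Local Open Scope ring_scope.

(* Lattice points with coordinates in {0,...,n+1}: this box contains D and
   every point of Z^d at l1-distance 1 from D. *)
Definition pt (d n : nat) := {ffun 'I_d -> 'I_n.+2}.

(* l1 distance (|a-b| = (a-b)+(b-a) with truncated subtraction) *)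
Definition dist1 d n (p q : pt d n) : nat :=
  (\sum_(i < d) ((p i - q i) + (q i - p i))%N)%N.

Definition ssum d n (x : pt d n) : nat := (\sum_(i < d) (x i : nat))%N.

Definition Dset d n : {set pt d n} :=
  [set x : pt d n | [forall i, (0 < x i)%N && (x i <= n)%N]].

Definition bDset d n : {set pt d n} :=
  [set p : pt d n | (p \notin Dset d n) && [exists q in Dset d n, dist1 p q == 1%N]].

Definition edge d n (p q : pt d n) : bool :=
  [&& p \in Dset d n :|: bDset d n, q \in Dset d n :|: bDset d n,
      dist1 p q == 1%N & ~~ ((p \in bDset d n) && (q \in bDset d n))].

Definition nbr d n (p : pt d n) : {set pt d n} := [set q : pt d n | edge p q].

(* q_b : the unique neighbour of a boundary point b *)
Definition qb d n (b : pt d n) : pt d n := odflt b [pick q in nbr b].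

(* the vector v_p (gamma given as a function on pairs, used only on edges) *)
Definition vvec (R : realType) d n (gam : pt d n -> pt d n -> R) (p q : pt d n) : R :=
  if q \in nbr p then gam p q
  else if q == p then - \sum_(r in nbr p) gam p r else 0.

Definition Lset d n (t : nat) : {set pt d n} := [set x in Dset d n | ssum x == t].
Definition LSset d n (t : nat) : {set pt d n} := [set x in Dset d n | ssum x <= t]%N.
Definition Kplus d n (t : nat) : {set pt d n} :=
  [set x in bDset d n | (ssum x == t) && [exists i, (x i : nat) == n.+1]].
Definition Kminus d n (t : nat) : {set pt d n} :=
  [set x in bDset d n | (ssum x == t) && [exists i, (x i : nat) == 0%N]].
Definition KSplus d n (t : nat) : {set pt d n} :=
  [set x in bDset d n | (ssum x <= t)%N && [exists i, (x i : nat) == n.+1]].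
Definition KSminus d n (t : nat) : {set pt d n} :=
  [set x in bDset d n | (ssum x <= t)%N && [exists i, (x i : nat) == 0%N]].
Definition JSset d n (t : nat) : {set pt d n} := KSminus d n t :|: KSplus d n t.+1.

Definition lap (R : realType) d n (gam : pt d n -> pt d n -> R) (u : pt d n -> R)
  (p : pt d n) : R := \sum_(q in nbr p) gam p q * (u q - u p).

(* u (a function on L_t^S ∪ J_{t-1}^S, only its values there matter) solves
   the Dirichlet problem defining T_2'^{(t)} with data x on L_t *)
Definition T2sol (R : realType) d n (gam : pt d n -> pt d n -> R) (t : nat)
  (x u : pt d n -> R) : Prop :=
  [/\ forall p, p \in Lset d n t -> u p = x p,
      forall b, b \in JSset d n t.-1 -> u b = 0
    & forall p, p \in LSset d n t.-1 -> lap gam u p = 0].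

(* graph of T_2'^{(t)} : y = T_2'^{(t)} x (as functions on J_{t-1}^S) *)
Definition T2graph (R : realType) d n (gam : pt d n -> pt d n -> R) (t : nat)
  (x y : pt d n -> R) : Prop :=
  exists u, T2sol gam t x u /\
    forall b, b \in JSset d n t.-1 -> y b = gam b (qb b) * (u (qb b) - u b).

Definition T2_injective (R : realType) d n (gam : pt d n -> pt d n -> R) (t : nat) : Prop :=
  forall x1 x2 y, T2graph gam t x1 y -> T2graph gam t x2 y ->
    forall p, p \in Lset d n t -> x1 p = x2 p.

Definition lin_indep_restr (R : realType) d n (A M : {set pt d n})
  (w : pt d n -> pt d n -> R) : Prop :=
  forall c : pt d n -> R,
    (forall x, x \in M -> \sum_(p in A) c p * w p x = 0) ->
    forall p, p \in A -> c p = 0.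

(* The combination sum_(p in A) c_p v_p, evaluated at x, is the weighted graph Laplacian
   at x of c extended by zero outside A, and at a boundary point b this Laplacian is the
   flux gam_(b q_b) (u_(q_b) - u_b).  So (i) -> (ii) applies (i) to the zero extension of c,
   and (ii) -> (iii) applies (ii) to the difference of two solutions with the same flux.
   For (iii) -> (i), u and 0 solve the Dirichlet problem with the same flux, so u = 0 on
   L_t; the maximum principle on L^S_(t-1) then gives u = 0, because every point of D has
   a neighbour of smaller coordinate sum lying in D or in K^-, where u = 0. *)

From HB Require Import structures.
From mathcomp Require Import all_boot all_order all_algebra.
From mathcomp Require Import reals.
From mathcomp Require Import zify ring.
Import Order.TTheory GRing.Theory Num.Theory.
Local Open Scope ring_scope.

Section Geometry.
Local Set Implicit Arguments.
Local Unset Strict Implicit.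
Variables d n : nat.
Implicit Types p q x b : pt d n.

Lemma dist1_sym p q : dist1 p q = dist1 q p.
Proof. by apply: eq_bigr => i _; rewrite addnC. Qed.

Lemma dist1_eq1 p q : dist1 p q = 1%N ->
  exists i, (forall j, j != i -> p j = q j) /\
            ((p i : nat) = q i + 1 \/ (q i : nat) = p i + 1)%N.
Proof.
move/eqP/sum_nat_eq1 => [i [_ di dj]]; exists i; split; last lia.
by move=> j /dj /(_ isT) dj0; apply: val_inj => /=; lia.
Qed.

Lemma ssum_agree_off p q i : (forall j, j != i -> p j = q j) ->
  (ssum p + q i = ssum q + p i)%N.
Proof.
move=> pq; rewrite /ssum (bigD1 i) //= [in RHS](bigD1 i) //=.
rewrite (eq_bigr (fun j => (q j : nat))) => [|j /pq -> //].
by rewrite addnAC [RHS]addnAC [(q i + _)%N]addnC.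
Qed.

Lemma DsetP p : reflect (forall i, 0 < p i <= n)%N (p \in Dset d n).
Proof. by rewrite inE; apply: (iffP forallP). Qed.

Lemma notin_Dset_extreme p : p \notin Dset d n ->
  exists i, (p i : nat) = 0%N \/ (p i : nat) = n.+1.
Proof.
move/DsetP => pND.
have [i pi] : exists i, ~~ (0 < p i <= n)%N.
  apply/existsP; apply: contraT; rewrite negb_exists => /forallP inD.
  by case: pND => i; have := inD i; rewrite negbK.
by exists i; have := ltn_ord (p i); lia.
Qed.

Lemma bDset_notD p : p \in bDset d n -> p \notin Dset d n.
Proof. by rewrite inE => /andP[]. Qed.

Lemma in_LSset s x : (x \in LSset d n s) = (x \in Dset d n) && (ssum x <= s)%N.
Proof. by rewrite !inE. Qed.

Lemma in_Lset s x : (x \in Lset d n s) = (x \in Dset d n) && (ssum x == s).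
Proof. by rewrite !inE. Qed.

Lemma in_KSminus s x : (x \in KSminus d n s) =
  (x \in bDset d n) && ((ssum x <= s)%N && [exists i, (x i : nat) == 0%N]).
Proof. by rewrite [LHS]inE. Qed.

Lemma in_KSplus s x : (x \in KSplus d n s) =
  (x \in bDset d n) && ((ssum x <= s)%N && [exists i, (x i : nat) == n.+1]).
Proof. by rewrite [LHS]inE. Qed.

Lemma LSset_D s x : x \in LSset d n s -> x \in Dset d n.
Proof. by rewrite in_LSset => /andP[]. Qed.

Lemma JSset_bD s b : b \in JSset d n s -> b \in bDset d n.
Proof. by rewrite in_setU in_KSminus in_KSplus => /orP[]/andP[]. Qed.

Lemma JSset_notin_LSset s {s'} b : b \in JSset d n s -> b \notin LSset d n s'.
Proof. by move/JSset_bD/bDset_notD; apply: contra; apply: LSset_D. Qed.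

Lemma edge_sym p q : edge p q = edge q p.
Proof.
rewrite /edge dist1_sym.
by case: (p \in _ :|: _); case: (q \in _ :|: _); case: (p \in bDset d n);
  case: (q \in bDset d n).
Qed.

Lemma in_nbr p q : (q \in nbr p) = edge p q.
Proof. by rewrite inE. Qed.

Lemma nbr_sym p q : (q \in nbr p) = (p \in nbr q).
Proof. by rewrite !in_nbr edge_sym. Qed.

Lemma nbr_irrefl x : x \notin nbr x.
Proof.
by rewrite in_nbr /edge /dist1 big1 => [|i _]; rewrite ?subnn //= !andbF.
Qed.

Lemma edge_of_Dset p q : p \in Dset d n -> q \in Dset d n :|: bDset d n ->
  dist1 p q = 1%N -> edge p q.
Proof.
move=> pD qDB pq; rewrite /edge in_setU pD qDB pq eqxx /=.
by rewrite (negbTE (contraL (@bDset_notD p) _)) //= negbK.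
Qed.

Lemma nbr_bDset_D b q : b \in bDset d n -> q \in nbr b -> q \in Dset d n.
Proof.
move=> bB; rewrite in_nbr => /and4P[_ qDB _]; rewrite bB /= => qNB.
by move: qDB; rewrite in_setU (negbTE qNB) orbF.
Qed.

Lemma agree_off_extreme p q i k : (forall j, j != k -> p j = q j) ->
  q \in Dset d n -> ((p i : nat) = 0%N \/ (p i : nat) = n.+1) -> i = k.
Proof.
move=> pq /DsetP qD pi; apply/eqP; apply: contraT => /pq pqi.
by have := qD i; rewrite -pqi; lia.
Qed.

Lemma nbr_bDset_coord b q i : b \in bDset d n -> q \in nbr b ->
  ((b i : nat) = 0%N \/ (b i : nat) = n.+1) ->
  (forall j, j != i -> q j = b j) /\
  (q i : nat) = (if (b i : nat) == 0%N then 1%N else n).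
Proof.
move=> bB qN bi; have qD := nbr_bDset_D bB qN.
move: qN; rewrite in_nbr => /and4P[_ _ /eqP/dist1_eq1[k [bq bqk]] _].
have ik := agree_off_extreme bq qD bi; subst k.
split=> [j /bq -> //|]; move/DsetP: qD => /(_ i).
by case: ifP => /eqP; lia.
Qed.

Lemma nbr_bDset b : b \in bDset d n -> nbr b = [set qb b].
Proof.
move=> bB; have [i bi] := notin_Dset_extreme (bDset_notD bB).
have nbr_uniq q1 q2 : q1 \in nbr b -> q2 \in nbr b -> q1 = q2.
  move=> /(nbr_bDset_coord bB)/(_ bi) [bq1 q1i] /(nbr_bDset_coord bB)/(_ bi) [bq2 q2i].
  apply/ffunP => j; have [->|ji] := eqVneq j i; last by rewrite bq1 // bq2.
  by apply: val_inj; rewrite /= q1i q2i.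
have qbN : qb b \in nbr b.
  rewrite /qb; case: pickP => [//|noN].
  move: (bB); rewrite inE => /andP[_ /existsP[q /andP[qD /eqP qb1]]].
  have qN : q \in nbr b.
    rewrite in_nbr edge_sym; apply: edge_of_Dset qD _ _; last by rewrite dist1_sym.
    by rewrite in_setU bB orbT.
  by rewrite noN in qN.
by apply/setP => q; rewrite in_set1; apply/idP/eqP => [qN|->]; first exact: nbr_uniq.
Qed.

Lemma nbr_LSset s x q : x \in LSset d n s -> q \in nbr x ->
  q \in LSset d n s.+1 :|: JSset d n s.
Proof.
rewrite in_LSset => /andP[xD xs].
rewrite in_nbr => /and4P[_ qDB /eqP/dist1_eq1[k [xq xqk]] _].
have := ssum_agree_off xq; move/DsetP: (xD) => xbd ss.
rewrite !in_setU in_LSset in_KSminus in_KSplus.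
have [qD|qND] := boolP (q \in Dset d n); first by rewrite /=; apply/orP; left; lia.
have qB : q \in bDset d n by move: qDB; rewrite in_setU (negbTE qND).
have [i qi] := notin_Dset_extreme qND.
have ik := agree_off_extreme (fun j jk => esym (xq j jk)) xD qi; subst k.
have := xbd i; rewrite qB /=; case: qi => qi xi; apply/orP.
- by left; apply/andP; split; [lia | apply/existsP; exists i; rewrite qi].
- by right; apply/andP; split; [lia | apply/existsP; exists i; rewrite qi].
Qed.

Lemma nbr_JSset s b q : b \in JSset d n s -> q \in nbr b -> q \in LSset d n s.+1.
Proof.
move=> bJ qN; have bB := JSset_bD bJ; rewrite in_LSset (nbr_bDset_D bB qN) /=.
move: bJ; rewrite in_setU in_KSminus in_KSplus bB /=.
case/orP=> /andP[bs /existsP[i /eqP bi]];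
  [have [bq qi] := nbr_bDset_coord bB qN (or_introl bi)
  |have [bq qi] := nbr_bDset_coord bB qN (or_intror bi)];
  by have := ssum_agree_off bq; rewrite qi bi /=; lia.
Qed.

Lemma exists_lower_nbr p (i : 'I_d) : p \in Dset d n ->
  exists q, [/\ q \in nbr p, (ssum q < ssum p)%N &
             q \in Dset d n \/ exists j, (q j : nat) = 0%N].
Proof.
move=> pD; move/DsetP: (pD) => pbd.
pose q : pt d n := [ffun j => if j == i then inord (p i).-1 else p j].
have qi : (q i : nat) = (p i).-1.
  by rewrite ffunE eqxx inordK //; have := ltn_ord (p i); have := pbd i; lia.
have qp j : j != i -> q j = p j by rewrite ffunE => /negbTE ->.
have pq1 : dist1 p q = 1%N.
  rewrite /dist1 (bigD1 i) //= big1 => [|j /qp ->]; last by rewrite subnn.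
  by rewrite qi; have := pbd i; lia.
have ss := ssum_agree_off qp.
have qD_or_0 : q \in Dset d n \/ exists j, (q j : nat) = 0%N.
  have [pi1|pi_gt1] := eqVneq (p i : nat) 1%N; first by right; exists i; rewrite qi pi1.
  left; apply/DsetP => j; have [->|/qp ->] := eqVneq j i; last exact: pbd.
  by rewrite qi; have := pbd i; lia.
exists q; split => //; last by rewrite qi in ss; have := pbd i; lia.
rewrite in_nbr edge_of_Dset // in_setU; have [//|qND /=] := boolP (q \in Dset d n).
by rewrite inE qND /=; apply/existsP; exists p; rewrite pD dist1_sym pq1.
Qed.

End Geometry.

Section Laplacian.
Local Set Implicit Arguments.
Local Unset Strict Implicit.
Variables (R : realType) (d n : nat) (gam : pt d n -> pt d n -> R).

Lemma lap0 x : lap gam (fun _ => 0) x = 0.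
Proof. by rewrite /lap big1 // => q _; rewrite subrr mulr0. Qed.

Lemma lapN (u : pt d n -> R) x : lap gam (fun z => - u z) x = - lap gam u x.
Proof.
by rewrite /lap -sumrN; apply: eq_bigr => q _; rewrite -mulrN; congr (_ * _); ring.
Qed.

Lemma lapB (u1 u2 : pt d n -> R) x :
  lap gam (fun z => u1 z - u2 z) x = lap gam u1 x - lap gam u2 x.
Proof.
by rewrite /lap -sumrB; apply: eq_bigr => q _; rewrite -mulrBr; congr (_ * _); ring.
Qed.

Lemma lap_bDset (u : pt d n -> R) b : b \in bDset d n ->
  lap gam u b = gam b (qb b) * (u (qb b) - u b).
Proof. by move=> /nbr_bDset nbr_b; rewrite /lap nbr_b big_set1. Qed.

Lemma lap_cut_LSset s (u : pt d n -> R) x :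
  (forall b, b \in JSset d n s -> u b = 0) -> x \in LSset d n s :|: JSset d n s ->
  lap gam (fun y => if y \in LSset d n s.+1 then u y else 0) x = lap gam u x.
Proof.
move=> uJ xSJ.
have cutE y : y \in LSset d n s.+1 :|: JSset d n s ->
    (if y \in LSset d n s.+1 then u y else 0) = u y.
  by rewrite in_setU; case: ifP => //= _ /uJ ->.
rewrite /lap; apply: eq_bigr => q qN; rewrite !cutE //.
- by move: xSJ; rewrite !in_setU !in_LSset => /orP[/andP[-> /leqW ->]|->] //; rewrite orbT.
- move: xSJ; rewrite in_setU => /orP[xS|xJ]; first exact: nbr_LSset xS qN.
  by rewrite in_setU (nbr_JSset xJ qN).
Qed.

Hypothesis gam_sym : forall p q, edge p q -> gam p q = gam q p.
Hypothesis gam_pos : forall p q, edge p q -> 0 < gam p q.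

Lemma vvec_nbr p x : vvec gam p x =
  (if p \in nbr x then gam x p else 0) - (if p == x then \sum_(r in nbr x) gam x r else 0).
Proof.
rewrite /vvec nbr_sym; case: ifP => [px|_].
  have /negbTE-> : p != x by apply: contraTneq px => ->; apply: nbr_irrefl.
  by rewrite subr0 gam_sym // -in_nbr nbr_sym.
by rewrite sub0r; have [->|_] := eqVneq p x; rewrite ?eqxx ?oppr0.
Qed.

Lemma sum_vvec (A : {set pt d n}) (c : pt d n -> R) x :
  \sum_(p in A) c p * vvec gam p x = lap gam (fun y => if y \in A then c y else 0) x.
Proof.
pose ct y := if y \in A then c y else 0.
rewrite big_mkcond (eq_bigr (fun p => ct p * vvec gam p x)) => [|p _]; last first.
  by rewrite /ct; case: ifP; rewrite ?mul0r.
under eq_bigr do rewrite vvec_nbr mulrBr.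
rewrite sumrB.
have -> : \sum_p ct p * (if p \in nbr x then gam x p else 0) =
          \sum_(p in nbr x) ct p * gam x p.
  by rewrite [RHS]big_mkcond; apply: eq_bigr => p _; case: ifP; rewrite ?mulr0.
have -> : \sum_p ct p * (if p == x then \sum_(r in nbr x) gam x r else 0) =
          ct x * \sum_(r in nbr x) gam x r.
  rewrite (bigD1 x) //= eqxx [X in _ + X]big1 ?addr0 // => p /negbTE->.
  by rewrite mulr0.
rewrite /lap -/ct mulr_sumr -sumrB; apply: eq_bigr => q _.
by rewrite mulrBr !(mulrC (gam x q)).
Qed.

Lemma lap_eq0_nbr_max (w : pt d n -> R) x :
  lap gam w x = 0 -> (forall q, q \in nbr x -> w q <= w x) ->
  forall q, q \in nbr x -> w q = w x.
Proof.
move=> harm_x le_wx q qN.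
have term_ge0 r : r \in nbr x -> 0 <= gam x r * (w x - w r).
  by move=> rN; rewrite mulr_ge0 ?subr_ge0 ?le_wx // ltW // gam_pos // -in_nbr.
have terms_sum0 : \sum_(r in nbr x) gam x r * (w x - w r) = 0.
  apply/eqP; rewrite -oppr_eq0 -sumrN; apply/eqP; rewrite -[RHS]harm_x.
  by apply: eq_bigr => r _; rewrite -mulrN opprB.
have /eqP := psumr_eq0P term_ge0 terms_sum0 qN.
by rewrite mulf_eq0 subr_eq0 gt_eqF ?gam_pos -?in_nbr // => /eqP.
Qed.

(* A positive maximiser x of least coordinate sum is impossible: by [lap_eq0_nbr_max] its
   lower neighbour is again a maximiser, hence not in D by minimality, hence in K^-. *)
Lemma harmonic_le0 s (w : pt d n -> R) : (0 < d)%N ->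
  (forall p, p \in LSset d n s -> lap gam w p = 0) ->
  (forall p, p \in Lset d n s.+1 -> w p = 0) ->
  (forall b, b \in JSset d n s -> w b = 0) ->
  forall p, p \in LSset d n s -> w p <= 0.
Proof.
move=> d_gt0 harm wL wJ p0 p0S; rewrite leNgt; apply/negP => w_gt0.
have [pm pmS pm_max] := @arg_maxP _ _ _ p0 (mem (LSset d n s)) w p0S.
set m := w pm; have m_gt0 : 0 < m := lt_le_trans w_gt0 (pm_max _ p0S).
pose maximiser q := (q \in LSset d n s) && (w q == m).
have pm_maximiser : maximiser pm by rewrite /maximiser eqxx andbT.
have [x /andP[xS /eqP wx] x_min] := arg_minnP (@ssum d n) pm_maximiser.
have nbr_le q : q \in nbr x -> w q <= w x.
  move=> qN; rewrite wx; move: (nbr_LSset xS qN); rewrite in_setU.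
  case/orP=> [qS1|/wJ->]; last exact: ltW.
  have [qs|qs] := leqP (ssum q) s.
    by apply: pm_max; change (q \in LSset d n s); rewrite in_LSset (LSset_D qS1) qs.
  rewrite wL ?ltW // in_Lset (LSset_D qS1) /=.
  by move: qS1; rewrite in_LSset => /andP[_]; lia.
have xs : (ssum x <= s)%N by move: xS; rewrite in_LSset => /andP[].
have [q [qN q_lt qD_or_0]] := exists_lower_nbr (Ordinal d_gt0) (LSset_D xS).
have wq : w q = m by rewrite (lap_eq0_nbr_max (harm x xS) nbr_le qN).
case: qD_or_0 => [qD|[i qi]].
  have qS : q \in LSset d n s by rewrite in_LSset qD /=; lia.
  by have := x_min q; rewrite /maximiser qS wq eqxx => /(_ isT); lia.
have qB : q \in bDset d n.
  move: qN; rewrite in_nbr => /and4P[_ + _ _]; rewrite in_setU => /orP[/DsetP qD|//].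
  by have := qD i; rewrite qi.
have qJ : q \in JSset d n s.
  rewrite in_setU in_KSminus qB /=; apply/orP; left; apply/andP; split; first lia.
  by apply/existsP; exists i; rewrite qi.
by move: m_gt0; rewrite -wq wJ // ltxx.
Qed.

Lemma harmonic_eq0 s (w : pt d n -> R) : (0 < d)%N ->
  (forall p, p \in LSset d n s -> lap gam w p = 0) ->
  (forall p, p \in Lset d n s.+1 -> w p = 0) ->
  (forall b, b \in JSset d n s -> w b = 0) ->
  forall p, p \in LSset d n s -> w p = 0.
Proof.
move=> d_gt0 harm wL wJ p pS; apply/eqP.
rewrite eq_le (harmonic_le0 d_gt0 harm wL wJ pS) /= -oppr_le0.
apply: (harmonic_le0 (s := s) (w := fun z => - w z)) => // [q qS|q qL|b bJ].
- by rewrite lapN harm // oppr0.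
- by rewrite wL // oppr0.
- by rewrite wJ // oppr0.
Qed.

Definition Cauchy_uniqueness (s : nat) : Prop :=
  forall u : pt d n -> R,
    (forall p, p \in LSset d n s -> lap gam u p = 0) ->
    (forall b, b \in JSset d n s -> u b = 0) ->
    (forall b, b \in JSset d n s -> gam b (qb b) * (u (qb b) - u b) = 0) ->
    forall p, p \in LSset d n s.+1 :|: JSset d n s -> u p = 0.

Lemma Cauchy_uniqueness_lin_indep s : Cauchy_uniqueness s ->
  lin_indep_restr (LSset d n s.+1) (LSset d n s :|: JSset d n s) (vvec gam).
Proof.
move=> uniq c comb0 p pS.
pose u y := if y \in LSset d n s.+1 then c y else 0.
have lap_u x : x \in LSset d n s :|: JSset d n s -> lap gam u x = 0.
  by move=> xSJ; rewrite -sum_vvec comb0.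
have : u p = 0.
  apply: uniq; last by rewrite in_setU pS.
  - by move=> x xS; rewrite lap_u // in_setU xS.
  - by move=> b bJ; rewrite /u (negbTE (JSset_notin_LSset bJ)).
  - by move=> b bJ; rewrite -lap_bDset ?(JSset_bD bJ) // lap_u // in_setU bJ orbT.
by rewrite /u pS.
Qed.

Lemma lin_indep_T2_injective s :
  lin_indep_restr (LSset d n s.+1) (LSset d n s :|: JSset d n s) (vvec gam) ->
  T2_injective gam s.+1.
Proof.
move=> indep x1 x2 y [u1 [[u1L u1J u1S] u1y]] [u2 [[u2L u2J u2S] u2y]] p pL.
pose w z := u1 z - u2 z.
have wJ b : b \in JSset d n s -> w b = 0 by move=> bJ; rewrite /w u1J // u2J // subrr.
have w0 : forall q, q \in LSset d n s.+1 -> w q = 0.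
  apply: indep => z zSJ; rewrite sum_vvec lap_cut_LSset // lapB.
  move: zSJ; rewrite in_setU => /orP[zS|zJ]; first by rewrite u1S // u2S // subrr.
  by rewrite !lap_bDset ?(JSset_bD zJ) // -u1y // -u2y // subrr.
apply/eqP; rewrite -u1L // -u2L // -subr_eq0; apply/eqP/w0.
by move: pL; rewrite in_Lset in_LSset => /andP[-> /eqP->] /=.
Qed.

Lemma T2_injective_Cauchy_uniqueness s : (0 < d)%N ->
  T2_injective gam s.+1 -> Cauchy_uniqueness s.
Proof.
move=> d_gt0 inj u harm uJ flux0.
have zero_graph : T2graph gam s.+1 (fun _ => 0) (fun _ => 0).
  exists (fun _ => 0); split; first by split=> // p _; apply: lap0.
  by move=> b _; rewrite subrr mulr0.
have uL p : p \in Lset d n s.+1 -> u p = 0.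
  apply: (inj u _ _ _ zero_graph); exists u; split=> // b bJ; by rewrite flux0.
move=> p; rewrite in_setU => /orP[pS|]; last exact: uJ.
have [ps|ps] := leqP (ssum p) s.
  by apply: (harmonic_eq0 d_gt0 harm uL uJ); rewrite in_LSset (LSset_D pS) ps.
by apply: uL; rewrite in_Lset (LSset_D pS); move: pS; rewrite in_LSset => /andP[_]; lia.
Qed.

End Laplacian.

Theorem lemma3p2 (R : realType) (d n t : nat) (gam : pt d n -> pt d n -> R) :
  (2 <= d)%N -> (1 <= n)%N -> (d <= t)%N -> (t <= d * n)%N ->
  (forall p q, edge p q -> 0 < gam p q) ->
  (forall p q, edge p q -> gam p q = gam q p) ->
  [<-> (* (i) *)
       (forall u : pt d n -> R,
          (forall p, p \in LSset d n t.-1 -> lap gam u p = 0) ->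
          (forall b, b \in JSset d n t.-1 -> u b = 0) ->
          (forall b, b \in JSset d n t.-1 ->
             gam b (qb b) * (u (qb b) - u b) = 0) ->
          forall p, p \in LSset d n t :|: JSset d n t.-1 -> u p = 0);
       (* (ii) *)
       lin_indep_restr (LSset d n t) (LSset d n t.-1 :|: JSset d n t.-1)
         (vvec gam);
       (* (iii) *)
       T2_injective gam t].
Proof.
move=> d_ge2 _ d_le_t _ gam_pos gam_sym.
have d_gt0 : (0 < d)%N := ltnW d_ge2.
case: t d_le_t => [|s] d_le_t; first by exfalso; lia.
tfae.
- exact: Cauchy_uniqueness_lin_indep gam_sym s.
- exact: lin_indep_T2_injective gam_sym s.
- exact: T2_injective_Cauchy_uniqueness gam_pos s d_gt0.
Qed.
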